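(* Let $n>0$ and let $\{p_j:j\le n\}$ be pairwise Rudin–Keisler incomparable selective ultrafilters on $\omega$. For each $j\le n$ let $\{a^j_k:k\in\omega\}\in p_j$ be a strictly increasing sequence with $a^j_k>k$ for every $k\in\omega$. Then there is a family $\{I_j:j\le n\}$ of subsets of $\omega$ such that (i) $\{a^j_k:k\in I_j\}\in p_j$ for each $j\le n$; and (ii) the intervals $[k,a^j_k]$ for $j\le n$, $k\in I_j$ are pairwise disjoint intervals of $\omega$.
   Context: A selective ultrafilter is a free ultrafilter $p$ on $\omega$ such that for every partition $\{A_n:n\in\omega\}$ of $\omega$ either some $A_n\in p$ or there is $B\in p$ with $|B\cap A_n|=1$ for every $n$. For $p,q$ free ultrafilters, $p\le_{RK}q$ if there is $f:\omega\to\omega$ with $p=\{A\subseteq\omega: f^{-1}(A)\in q\}$; $p,q$ are incomparable if neither $p\le_{RK}q$ nor $q\le_{RK}p$. $[k,a]$ denotes $\{i\in\omega:k\le i\le a\}$. *)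

From Stdlib Require Import Arith.

Definition subset_nat := nat -> Prop.

Definition free_ultrafilter (p : subset_nat -> Prop) : Prop :=
  p (fun _ => True) /\
  ~ p (fun _ => False) /\
  (forall A B : subset_nat, p A -> (forall x, A x -> B x) -> p B) /\
  (forall A B : subset_nat, p A -> p B -> p (fun x => A x /\ B x)) /\
  (forall A : subset_nat, p A \/ p (fun x => ~ A x)) /\
  (forall m : nat, ~ p (fun x => x = m)).

Definition is_partition (A : nat -> subset_nat) : Prop :=
  (forall n, exists x, A n x) /\
  (forall n m x, n <> m -> A n x -> A m x -> False) /\
  (forall x, exists n, A n x).

Definition selective (p : subset_nat -> Prop) : Prop :=
  free_ultrafilter p /\
  forall A : nat -> subset_nat, is_partition A ->
    (exists n, p (A n)) \/
    (exists B : subset_nat, p B /\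
       forall n, exists! x, B x /\ A n x).

Definition RK_le (p q : subset_nat -> Prop) : Prop :=
  exists f : nat -> nat, forall A : subset_nat, p A <-> q (fun x => A (f x)).

Definition RK_incomparable (p q : subset_nat -> Prop) : Prop :=
  ~ RK_le p q /\ ~ RK_le q p.

Definition interval (k a : nat) : subset_nat := fun i => k <= i <= a.

(* Cut omega into consecutive blocks [b_i, b_(i+1)) so long that every a^j
   maps block i into blocks i or i+1; with pi the block index, the interval
   [k, a^j_k] then meets only the blocks pi(a^j_k) - 1 and pi(a^j_k).  It
   therefore suffices to pick sets in the p_j on whose elements pi takes values
   at mutual distance >= 2.  Selectivity makes pi injective on a set in p_j, and
   restricting to one parity class separates the elements of a single p_j.  For
   j <> j', if no set V of block indices separated pi(p_j) from pi(p_j') shifted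
   by d, the two image ultrafilters would coincide and, pi being injective on a
   set in p_j, p_j <=_RK p_j' would follow; hence the block indices coming from
   different p_j can be kept at distance >= 2 as well. *)

From Stdlib Require Import Arith Lia ClassicalEpsilon.

Definition injective_on (C : subset_nat) (f : nat -> nat) : Prop :=
  forall x y, C x -> C y -> f x = f y -> x = y.

Definition finite_fibers (f : nat -> nat) : Prop :=
  forall m, exists N, forall x, f x = m -> x < N.

Definition apart (f : nat -> nat) (x y : nat) : Prop :=
  f x + 2 <= f y \/ f y + 2 <= f x.

Lemma guarded_choice {A B : Type} (b : B) (P : A -> Prop) (R : A -> B -> Prop) :
  (forall x, P x -> exists y, R x y) -> exists f : A -> B, forall x, P x -> R x (f x).
Proof.
  intros H.
  destruct (choice (fun x y => P x -> R x y)) as [f Hf]; [|now exists f].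
  intros x; destruct (classic (P x)) as [Px|nPx].
  - destruct (H x Px) as [y Hy]; now exists y.
  - now exists b.
Qed.

Section Ultrafilter.

Variable p : subset_nat -> Prop.
Hypothesis p_uf : free_ultrafilter p.

Lemma uf_superset (A B : subset_nat) : p A -> (forall x, A x -> B x) -> p B.
Proof. apply p_uf. Qed.

Lemma uf_meet (A B : subset_nat) : p A -> p B -> p (fun x => A x /\ B x).
Proof. apply p_uf. Qed.

Lemma uf_compl (A : subset_nat) : p A \/ p (fun x => ~ A x).
Proof. apply p_uf. Qed.

Lemma uf_not_compl (A : subset_nat) : p A -> p (fun x => ~ A x) -> False.
Proof.
  intros HA HnA; apply p_uf.
  apply (uf_superset _ _ (uf_meet _ _ HA HnA)); now intros x [].
Qed.

Lemma uf_agree (C A B : subset_nat) :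
  p C -> (forall x, C x -> A x -> B x) -> p A -> p B.
Proof.
  intros HC HAB HA; apply (uf_superset _ _ (uf_meet _ _ HC HA)).
  intros x []; auto.
Qed.

Lemma uf_not_bounded (N : nat) : ~ p (fun x => x < N).
Proof.
  induction N as [|N IH]; intros HN.
  - apply p_uf; apply (uf_superset _ _ HN); lia.
  - destruct (uf_compl (fun x => x < N)) as [HlN|HgeN]; [easy|].
    apply (proj2 (proj2 (proj2 (proj2 (proj2 p_uf)))) N).
    apply (uf_superset _ _ (uf_meet _ _ HN HgeN)); intros x []; lia.
Qed.

Lemma uf_meet_upto (C : subset_nat) (D : nat -> subset_nat) (P : nat -> Prop) m :
  p C -> (forall j, j <= m -> P j -> p (D j)) ->
  p (fun x => C x /\ forall j, j <= m -> P j -> D j x).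
Proof.
  intros HC; induction m as [|m IH]; intros HD.
  - destruct (classic (P 0)) as [P0|nP0].
    + apply (uf_superset _ _ (uf_meet _ _ HC (HD 0 (le_n 0) P0))).
      intros x [Cx Dx]; split; [easy|]; intros j hj _; now replace j with 0 by lia.
    + apply (uf_superset _ _ HC); intros x Cx; split; [easy|].
      intros j hj Pj; replace j with 0 in Pj by lia; contradiction.
  - assert (Hm := IH (fun j hj => HD j (le_S _ _ hj))).
    destruct (classic (P (S m))) as [PSm|nPSm].
    + apply (uf_superset _ _ (uf_meet _ _ Hm (HD _ (le_n _) PSm))).
      intros x [[Cx Dx] DSx]; split; [easy|]; intros j hj Pj.
      destruct (Nat.eq_dec j (S m)) as [->|]; [easy|]; apply Dx; [lia|easy].
    + apply (uf_superset _ _ Hm); intros x [Cx Dx]; split; [easy|]; intros j hj Pj.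
      destruct (Nat.eq_dec j (S m)) as [->|]; [contradiction|]; apply Dx; [lia|easy].
Qed.

Lemma uf_even_or_odd : exists e, p (fun x => Nat.even x = e).
Proof.
  destruct (uf_compl (fun x => Nat.even x = true)) as [H|H]; [now exists true|].
  exists false; apply (uf_superset _ _ H); intros x; now destruct (Nat.even x).
Qed.

(* [g] pulls a point of [C] back from its [f]-image, so [h := g \o g'] witnesses
   [p <=_RK q] as soon as [f] and [g'] push [p] and [q] to the same ultrafilter. *)
Lemma RK_le_of_image_eq (q : subset_nat -> Prop) (C : subset_nat) (f g' : nat -> nat) :
  p C -> injective_on C f ->
  (forall V : subset_nat, p (fun x => V (f x)) <-> q (fun x => V (g' x))) ->
  RK_le p q.
Proof.
  intros HC Hinj Himg.
  set (g := fun m => epsilon (inhabits 0) (fun x => C x /\ f x = m)).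
  assert (Hg : forall x, C x -> g (f x) = x).
  { intros x Cx.
    assert (C (g (f x)) /\ f (g (f x)) = f x) as [Cg fg]
      by (apply (epsilon_spec (inhabits 0) (fun y => C y /\ f y = f x)); now exists x).
    now apply Hinj. }
  exists (fun x => g (g' x)); intros A; rewrite <- (Himg (fun m => A (g m))).
  split; apply uf_agree with C; try easy; intros x Cx; now rewrite Hg.
Qed.

End Ultrafilter.

Lemma image_separation (p q : subset_nat -> Prop) (f g : nat -> nat) :
  free_ultrafilter p -> free_ultrafilter q ->
  ~ (forall V : subset_nat, p (fun x => V (f x)) <-> q (fun x => V (g x))) ->
  exists V : subset_nat, p (fun x => V (f x)) /\ q (fun x => ~ V (g x)).
Proof.
  intros Hp Hq Hneq; apply NNPP; intros Hnone; apply Hneq.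
  assert (Hto : forall V : subset_nat, p (fun x => V (f x)) -> q (fun x => V (g x))).
  { intros V HV; destruct (uf_compl q Hq (fun x => V (g x))) as [|HnV]; [easy|].
    exfalso; apply Hnone; now exists V. }
  intros V; split; [apply Hto|intros HV].
  destruct (uf_compl p Hp (fun x => V (f x))) as [|HnV]; [easy|].
  exfalso; exact (uf_not_compl q Hq _ HV (Hto (fun m => ~ V m) HnV)).
Qed.

Section Selective.

Variable p : subset_nat -> Prop.
Hypothesis p_sel : selective p.

Let p_uf : free_ultrafilter p := proj1 p_sel.

(* Selectivity only speaks about partitions into nonempty pieces, so the fibers
   of [f] are padded with the numbers of the parity class missing from [p]. *)
Lemma selective_constant_or_injective (f : nat -> nat) :
  (exists m, p (fun x => f x = m)) \/ exists B, p B /\ injective_on B f.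
Proof.
  destruct (uf_even_or_odd p p_uf) as [e He].
  set (g := fun x => if Bool.eqb (Nat.even x) e then f x else Nat.div2 x).
  assert (Hgf : forall x, Nat.even x = e -> g x = f x)
    by (intros x Ex; unfold g; now rewrite Ex, Bool.eqb_reflx).
  destruct (proj2 p_sel (fun m x => g x = m)) as [[m Hm]|[B [HB HBu]]].
  - split; [|split].
    + intros m; unfold g; destruct e.
      * exists (S (2 * m)).
        rewrite Nat.even_succ, <- Nat.negb_even, Nat.even_mul; apply Nat.div2_succ_double.
      * exists (2 * m); rewrite Nat.even_mul; apply Nat.div2_double.
    + intros m m' x Hmm' <- <-; now apply Hmm'.
    + intros x; now exists (g x).
  - left; exists m; apply (uf_agree p p_uf _ (fun x => g x = m) _ He); [|easy].
    intros x Ex; now rewrite Hgf.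
  - right; exists (fun x => B x /\ Nat.even x = e); split; [now apply uf_meet|].
    intros x y [Bx Ex] [By Ey] Hxy.
    destruct (HBu (g x)) as [z [_ Hz]].
    rewrite <- (Hz x), <- (Hz y); try easy; split; try easy.
    now rewrite !Hgf.
Qed.

Lemma selective_injective_on (f : nat -> nat) :
  finite_fibers f -> exists B, p B /\ injective_on B f.
Proof.
  intros Hfin; destruct (selective_constant_or_injective f) as [[m Hm]|]; [|easy].
  destruct (Hfin m) as [N HN]; exfalso.
  exact (uf_not_bounded p p_uf N (uf_superset p p_uf _ _ Hm HN)).
Qed.

Lemma apart_of_same_parity (f : nat -> nat) x y :
  Nat.even (f x) = Nat.even (f y) -> f x <> f y -> apart f x y.
Proof.
  intros Epar Hne; unfold apart.
  assert (Hsucc : forall u, Nat.even (S u) <> Nat.even u)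
    by (intros u; rewrite Nat.even_succ, <- Nat.negb_even; now destruct (Nat.even u)).
  assert (f y <> S (f x)) by (intros E; apply (Hsucc (f x)); now rewrite <- E).
  assert (f x <> S (f y)) by (intros E; apply (Hsucc (f y)); now rewrite <- E).
  lia.
Qed.

Lemma selective_apart_set (f : nat -> nat) :
  finite_fibers f ->
  exists C, p C /\ forall x y, C x -> C y -> x <> y -> apart f x y.
Proof.
  intros Hfin; destruct (selective_injective_on f Hfin) as [B [HB Hinj]].
  assert (He : exists e, p (fun x => Nat.even (f x) = e)).
  { destruct (uf_compl p p_uf (fun x => Nat.even (f x) = true)) as [H|H];
      [now exists true|exists false].
    apply (uf_superset p p_uf _ _ H); intros x; now destruct (Nat.even (f x)). }
  destruct He as [e He].
  exists (fun x => B x /\ Nat.even (f x) = e); split; [now apply uf_meet|].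
  intros x y [Bx Ex] [By Ey] Hxy; apply apart_of_same_parity; [congruence|].
  intros E; now apply Hxy, Hinj.
Qed.

End Selective.

Lemma shifted_image_separation (p q : subset_nat -> Prop) (f : nat -> nat) (d : nat) :
  selective p -> free_ultrafilter q -> ~ RK_le p q -> finite_fibers f ->
  exists V : subset_nat, p (fun x => V (f x)) /\ q (fun x => ~ V (f x + d)).
Proof.
  intros Hp Hq HnRK Hfin.
  destruct (selective_injective_on p Hp f Hfin) as [C [HC Hinj]].
  apply (image_separation p q f (fun x => f x + d) (proj1 Hp) Hq).
  intros Himg; exact (HnRK (RK_le_of_image_eq p (proj1 Hp) q C f _ HC Hinj Himg)).
Qed.

Lemma incomparable_apart_sets (p q : subset_nat -> Prop) (f : nat -> nat) :
  selective p -> selective q -> RK_incomparable p q -> finite_fibers f ->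
  exists X Y : subset_nat, p X /\ q Y /\ forall x y, X x -> Y y -> apart f x y.
Proof.
  intros Hp Hq [Hpq Hqp] Hfin.
  destruct (shifted_image_separation p q f 0 Hp (proj1 Hq) Hpq Hfin) as [V0 [HV0 HnV0]].
  destruct (shifted_image_separation p q f 1 Hp (proj1 Hq) Hpq Hfin) as [V1 [HV1 HnV1]].
  destruct (shifted_image_separation q p f 1 Hq (proj1 Hp) Hqp Hfin) as [W1 [HW1 HnW1]].
  exists (fun x => V0 (f x) /\ V1 (f x) /\ ~ W1 (f x + 1)),
         (fun y => ~ V0 (f y + 0) /\ ~ V1 (f y + 1) /\ W1 (f y)).
  split; [|split].
  - now repeat apply uf_meet; try apply Hp.
  - now repeat apply uf_meet; try apply Hq.
  - intros x y (V0x & V1x & nW1x) (nV0y & nV1y & W1y); unfold apart.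
    assert (f x <> f y) by (intros E; apply nV0y; now rewrite Nat.add_0_r, <- E).
    assert (f x <> f y + 1) by (intros E; apply nV1y; now rewrite <- E).
    assert (f y <> f x + 1) by (intros E; apply nW1x; now rewrite <- E).
    lia.
Qed.

Section BlockIndex.

Variable b : nat -> nat.
Hypothesis b_0 : b 0 = 0.
Hypothesis b_increasing : forall i, b i < b (S i).

Fixpoint block_index (y : nat) : nat :=
  match y with
  | 0 => 0
  | S y' => if b (S (block_index y')) <=? S y' then S (block_index y') else block_index y'
  end.

Lemma block_start_monotone i i' : i <= i' -> b i <= b i'.
Proof. induction 1 as [|i' _ IH]; [easy|]; specialize (b_increasing i'); lia. Qed.

Lemma block_index_spec y : b (block_index y) <= y < b (S (block_index y)).
Proof.
  induction y as [|y IH]; simpl.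
  - specialize (b_increasing 0); lia.
  - specialize (b_increasing (S (block_index y))).
    destruct (Nat.leb_spec (b (S (block_index y))) (S y)); lia.
Qed.

Lemma block_index_monotone y y' : y <= y' -> block_index y <= block_index y'.
Proof.
  induction 1 as [|y' _ IH]; [easy|]; simpl.
  destruct (b (S (block_index y')) <=? S y'); auto.
Qed.

Lemma block_index_lt y i : y < b i -> block_index y < i.
Proof.
  intros Hy; destruct (le_lt_dec i (block_index y)) as [Hle|]; [|easy].
  pose proof (block_start_monotone _ _ Hle); pose proof (block_index_spec y); lia.
Qed.

Lemma block_index_finite_fibers : finite_fibers block_index.
Proof. intros m; exists (b (S m)); intros y <-; apply block_index_spec. Qed.

End BlockIndex.

Fixpoint sum_upto (g : nat -> nat) (n : nat) : nat :=
  match n with 0 => g 0 | S m => sum_upto g m + g (S m) end.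

Lemma le_sum_upto (g : nat -> nat) n j : j <= n -> g j <= sum_upto g n.
Proof.
  induction n as [|n IH]; intros Hj; simpl; [now replace j with 0 by lia|].
  destruct (Nat.eq_dec j (S n)) as [->|]; [lia|]; specialize (IH ltac:(lia)); lia.
Qed.

Section Blocks.

Variable n : nat.
Variable a : nat -> nat -> nat.
Hypothesis a_increasing : forall j k l, j <= n -> k < l -> a j k < a j l.

(* Block [i+1] is long enough to contain every [a j t] with [t] in block [i]. *)
Fixpoint block_start (i : nat) : nat :=
  match i with
  | 0 => 0
  | S i => S (block_start i + sum_upto (fun j => a j (block_start i)) n)
  end.

Lemma block_index_exists :
  exists pi : nat -> nat,
    (forall x y, x <= y -> pi x <= pi y) /\ finite_fibers pi /\
    forall j k, j <= n -> pi (a j k) <= S (pi k).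
Proof.
  assert (Hb : forall i, block_start i < block_start (S i)) by (intros i; simpl; lia).
  exists (block_index block_start); split; [|split].
  - apply block_index_monotone.
  - exact (block_index_finite_fibers block_start eq_refl Hb).
  - intros j k Hj.
    set (i := block_index block_start k).
    assert (Hk : k < block_start (S i)) by apply (block_index_spec _ eq_refl Hb).
    apply le_S_n, (block_index_lt _ eq_refl Hb).
    pose proof (a_increasing j _ _ Hj Hk).
    pose proof (le_sum_upto (fun j => a j (block_start (S i))) n j Hj).
    change (block_start (S (S i)))
      with (S (block_start (S i) + sum_upto (fun j => a j (block_start (S i))) n)).
    lia.
Qed.

End Blocks.

Lemma intervals_disjoint_of_apart (pi : nat -> nat) k u k' u' :
  (forall x y, x <= y -> pi x <= pi y) ->
  pi u <= S (pi k) -> pi u' <= S (pi k') -> apart pi u u' ->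
  forall x, interval k u x -> interval k' u' x -> False.
Proof.
  intros Hmono Hu Hu' Hapart x [Hkx Hxu] [Hk'x Hxu']; unfold apart in Hapart.
  pose proof (Hmono _ _ Hkx); pose proof (Hmono _ _ Hxu).
  pose proof (Hmono _ _ Hk'x); pose proof (Hmono _ _ Hxu').
  lia.
Qed.

Theorem mainTheorem4
  (n : nat) (p : nat -> subset_nat -> Prop) (a : nat -> nat -> nat) :
  0 < n ->
  (forall j, j <= n -> selective (p j)) ->
  (forall i j, i <= n -> j <= n -> i <> j -> RK_incomparable (p i) (p j)) ->
  (forall j, j <= n -> p j (fun x => exists k, x = a j k)) ->
  (forall j k l, j <= n -> k < l -> a j k < a j l) ->
  (forall j k, j <= n -> k < a j k) ->
  exists I : nat -> subset_nat,
    (forall j, j <= n -> p j (fun x => exists k, I j k /\ x = a j k)) /\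
    (forall j j' k k', j <= n -> j' <= n -> I j k -> I j' k' ->
       (j, k) <> (j', k') ->
       forall x, interval k (a j k) x -> interval k' (a j' k') x -> False).
Proof.
  intros _ Hsel Hinc Hrange Hincr _.
  destruct (block_index_exists n a Hincr) as (pi & Hmono & Hfin & Hjump).
  destruct (guarded_choice (fun _ => True) (fun j => j <= n)
    (fun j C => p j C /\ forall x y, C x -> C y -> x <> y -> apart pi x y)) as [C HC].
  { intros j Hj; exact (selective_apart_set (p j) (Hsel j Hj) pi Hfin). }
  destruct (guarded_choice (fun _ => True, fun _ => True)
    (fun jj => fst jj <= n /\ snd jj <= n /\ fst jj <> snd jj)
    (fun jj XY => p (fst jj) (fst XY) /\ p (snd jj) (snd XY) /\
       forall x y, fst XY x -> snd XY y -> apart pi x y)) as [XY HXY].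
  { intros [j j'] (Hj & Hj' & Hjj').
    destruct (incomparable_apart_sets (p j) (p j') pi (Hsel j Hj) (Hsel j' Hj')
      (Hinc j j' Hj Hj' Hjj') Hfin) as (X & Y & HXY); now exists (X, Y). }
  set (G := fun j x => C j x /\
    forall j', j' <= n -> j' <> j -> fst (XY (j, j')) x /\ snd (XY (j', j)) x).
  exists (fun j k => G j (a j k)); split.
  - intros j Hj; pose proof (proj1 (Hsel j Hj)) as Huf.
    apply (uf_superset _ Huf (fun x => (exists k, x = a j k) /\ G j x)).
    + apply (uf_meet _ Huf); [apply Hrange, Hj|].
      apply uf_meet_upto; [easy|apply HC, Hj|]; intros j' Hj' Hjj'.
      apply (uf_meet _ Huf); [apply (HXY (j, j'))|apply (HXY (j', j))]; simpl; auto.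
    + intros x [[k ->] Gx]; now exists k.
  - intros j j' k k' Hj Hj' [Cjk Gjk] [Cjk' Gjk'] Hne.
    apply intervals_disjoint_of_apart with pi; auto.
    destruct (Nat.eq_dec j j') as [<-|Hjj'].
    + apply (HC j Hj); [easy|easy|]; intros E; apply Hne; f_equal.
      destruct (Nat.lt_total k k') as [Hlt|[|Hlt]]; [|easy|];
        pose proof (Hincr j _ _ Hj Hlt); lia.
    + apply (HXY (j, j')); simpl; auto.
      * apply Gjk; auto.
      * apply Gjk'; auto.
Qed.
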